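(* Let $\alpha>\sqrt2+1$. The expected runtime of the Metropolis algorithm with parameter $\alpha$ on $\mathrm{DLB}:\{0,1\}^n\to\mathbb{R}$ is at most $\frac{n^2}{C(\alpha)}$, where $C(\alpha)=\frac{2}{\alpha}\left(\frac12-2\sum_{k=1}^\infty k\alpha^{-2k}\right)$.
   Context: Let $n$ be an even positive integer. For $x\in\{0,1\}^n$ consider the blocks $(x_{2\ell+1},x_{2\ell+2})$, $\ell=0,\dots,\frac n2-1$. If $x\neq(1,\dots,1)$, let $m$ be the smallest $\ell$ with $x_{2\ell+1}\neq 1$ or $x_{2\ell+2}\neq 1$, and define $\mathrm{DLB}(x)=2m+1$ if $x_{2m+1}+x_{2m+2}=0$ and $\mathrm{DLB}(x)=2m$ if $x_{2m+1}+x_{2m+2}=1$; set $\mathrm{DLB}(1,\dots,1)=n$. The Metropolis algorithm with parameter $\alpha>1$ maximizing $f:\{0,1\}^n\to\mathbb{R}$: choose $x^{(0)}$ uniformly at random in $\{0,1\}^n$. In each iteration $t=1,2,\dots$, choose $i\in[1..n]$ uniformly at random and let $y$ be $x^{(t-1)}$ with the $i$-th bit flipped. If $f(y)\ge f(x^{(t-1)})$ set $x^{(t)}=y$; otherwise set $x^{(t)}=y$ with probability $\alpha^{f(y)-f(x^{(t-1)})}$ and $x^{(t)}=x^{(t-1)}$ otherwise. Each generated search point is evaluated; the runtime is the number of fitness evaluations until (and including) the first evaluation of an optimum of $f$. *)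

From HB Require Import structures.
From mathcomp Require Import all_boot all_order all_algebra.
From mathcomp Require Import all_classical all_reals all_analysis.
Set Implicit Arguments. Unset Strict Implicit. Unset Printing Implicit Defensive.
Import Order.TTheory GRing.Theory Num.Theory.
Local Open Scope ring_scope.

(* Bit strings x = (x_1,...,x_n); coordinate x_{k+1} is [x (k : 'I_n)]. *)
Definition bits (n : nat) := {ffun 'I_n -> bool}.

(* 0-indexed bit access (x_{k+1} in the paper); false out of range. *)
Definition bitn (n : nat) (x : bits n) (k : nat) : bool :=
  if insub k is Some i then x i else false.

(* DLB: blocks (x_{2l+1}, x_{2l+2}) = (bitn x (2l), bitn x (2l+1)), l < n/2.
   m = smallest l whose block is not (1,1); if none, DLB = n. *)
Definition DLB (n : nat) (x : bits n) : nat :=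
  let m := find (fun l => ~~ (bitn x l.*2 && bitn x l.*2.+1)) (iota 0 n./2) in
  if m == n./2 then n
  else if ~~ bitn x m.*2 && ~~ bitn x m.*2.+1 then m.*2.+1 else m.*2.

Definition flip (n : nat) (x : bits n) (i : 'I_n) : bits n :=
  [ffun j => if j == i then ~~ x j else x j].

Definition is_opt (R : realType) (n : nat) (f : bits n -> R) (x : bits n) : bool :=
  [forall y, f y <= f x].

Definition acc (R : realType) (alpha : R) (n : nat) (f : bits n -> R)
  (x y : bits n) : R :=
  if f x <= f y then 1 else alpha `^ (f y - f x).

(* surv alpha f t y = Pr[ x^(t) = y and none of the t+1 evaluated points
   x^(0), y^(1), ..., y^(t) (y^(s) = proposal of iteration s) is an optimum ]. *)
Fixpoint surv (R : realType) (alpha : R) (n : nat) (f : bits n -> R) (t : nat)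
  (y : bits n) : R :=
  match t with
  | 0 => if is_opt f y then 0 else (#|{: bits n}|%:R)^-1
  | t'.+1 =>
      \sum_(x : bits n) surv alpha f t' x *
        \sum_(i : 'I_n) (n%:R)^-1 *
          (if is_opt f (flip x i) then 0
           else acc alpha f x (flip x i) * ((flip x i == y)%:R)
                + (1 - acc alpha f x (flip x i)) * ((x == y)%:R))
  end.

(* Expected runtime T (number of evaluations up to and including the first
   evaluation of an optimum), via E[T] = sum_{k>=0} Pr[T > k]:
   Pr[T > 0] = 1 and Pr[T > t+1] = sum_y surv t y. *)
Local Open Scope ereal_scope.
Definition expected_runtime (R : realType) (alpha : R) (n : nat)
  (f : bits n -> R) : \bar R :=
  (1 + \sum_(0 <= t <oo) ((\sum_(y : bits n) surv alpha f t y)%:E))%E.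
Local Close Scope ereal_scope.

Definition Cconst (R : realType) (alpha : R) : R :=
  2 / alpha * (2^-1 - 2 * limn (fun N => \sum_(1 <= k < N) k%:R * alpha ^- (2 * k))).

(* Additive drift for a block potential.  Let m be the first block of x that is
   not 11; DLB x is 2m + 1 if this block is 00 and 2m if it holds a single one.
   Take g(v) = n/2 - v/2 - b [v even] for v < n and g(n) = 0, so 0 <= g <= n/2.
   Flips above block m do not change DLB.  A flip in block l < m sets DLB to 2l,
   is accepted with probability alpha^-(DLB x - 2l) and raises g by at most m - l,
   so the flips below m cost at most 2 S (2 S / alpha in the 00 case), where
   S = sum_k k alpha^-2k.  The two flips in block m gain 2 b / alpha (block 00)
   or at least 1 - 2 b (a single one).  With b = 1/4 + P/8, P = 1/2 - 2 S, the
   expected decrease of g per step is at least D / n, D = 5 P / (4 alpha), and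
   P > 0 because alpha > 1 + sqrt 2 gives S <= q / (1 - q)^2 < 1/4 for
   q = alpha^-2.  Additive drift then bounds the expected runtime by
   1 + (n/2) / (D/n), and the factor 5/4 in D absorbs the 1. *)

From HB Require Import structures.
From mathcomp Require Import all_boot all_order all_algebra.
From mathcomp Require Import all_classical all_reals all_analysis.
From mathcomp Require Import zify ring lra.
Import Order.TTheory GRing.Theory Num.Theory numFieldNormedType.Exports.
Set Implicit Arguments. Unset Strict Implicit. Unset Printing Implicit Defensive.

Lemma find_iota_skip (a : pred nat) k m : m <= k -> (forall l, l < m -> ~~ a l) ->
  find a (iota 0 k) = m + find a (iota m (k - m)).
Proof.
move=> le_mk not_a; rewrite -{1}(subnKC le_mk) iotaD find_cat size_iota.
suff -> : has a (iota 0 m) = false by [].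
by apply/hasP => -[l]; rewrite mem_iota => /andP[_ lt_lm]; apply/negP/not_a.
Qed.

Lemma find_iota_eq (a : pred nat) k m :
  m < k -> (forall l, l < m -> ~~ a l) -> a m -> find a (iota 0 k) = m.
Proof.
move=> lt_mk not_a a_m.
by rewrite (find_iota_skip (ltnW lt_mk) not_a) -(subnSK lt_mk) /= a_m addn0.
Qed.

Section DLBBlocks.
Variable n : nat.
Implicit Types (x : bits n) (e : bool).

Definition full_block x l := bitn x l.*2 && bitn x l.*2.+1.
Definition empty_block x l := ~~ bitn x l.*2 && ~~ bitn x l.*2.+1.

Lemma DLBE x : DLB x =
  let m := find (fun l => ~~ full_block x l) (iota 0 n./2) in
  if m == n./2 then n else m.*2 + empty_block x m.
Proof.
rewrite /DLB /=; set m := find _ _; case: (m == n./2) => //.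
by rewrite /empty_block; case: (~~ bitn x m.*2 && _); rewrite ?addn0 ?addn1.
Qed.

Lemma DLB_first_bad x m : m < n./2 ->
    (forall l, l < m -> full_block x l) -> ~~ full_block x m ->
  DLB x = m.*2 + empty_block x m.
Proof.
move=> lt_m full_below bad_m; rewrite DLBE /=.
by rewrite (@find_iota_eq _ _ m) ?(ltn_eqF lt_m) // => l /full_below->.
Qed.

Lemma DLB_full_prefix x m : m <= n./2 -> (forall l, l < m -> full_block x l) ->
  DLB x = n \/ m.*2 <= DLB x.
Proof.
move=> le_m full_below; rewrite DLBE /=.
have : m <= find (fun l => ~~ full_block x l) (iota 0 n./2).
  by rewrite (find_iota_skip le_m) ?leq_addr // => l /full_below->.
by case: (_ == _) => le_mk; [left | right; rewrite -leq_double in le_mk; lia].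
Qed.

Lemma DLB_cases x : DLB x = n \/
  exists2 m, m < n./2 & [/\ forall l, l < m -> full_block x l, ~~ full_block x m
                         & DLB x = m.*2 + empty_block x m].
Proof.
set a := fun l => ~~ full_block x l; have := find_size a (iota 0 n./2).
rewrite size_iota leq_eqVlt DLBE /= -/a => /orP[/eqP-> | lt_m]; first by left; rewrite eqxx.
right; exists (find a (iota 0 n./2)) => //; split; last by rewrite (ltn_eqF lt_m).
- move=> l lt_l; have := before_find 0 lt_l.
  by rewrite nth_iota ?(ltn_trans lt_l) // add0n => /negbFE.
- have := nth_find 0 (_ : has a (iota 0 n./2)); rewrite nth_iota // add0n; apply.
  by rewrite has_find size_iota.
Qed.

Lemma DLB_le x : DLB x <= n.
Proof. by have [-> // | [m lt_m [_ _ ->]]] := DLB_cases x; case: (empty_block x m); lia. Qed.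

Lemma DLB_ones : DLB ([ffun => true] : bits n) = n.
Proof.
have bitn_ones k : bitn ([ffun => true] : bits n) k = (k < n).
  by rewrite /bitn; case: insubP => [j -> _|/negbTE//]; rewrite ffunE.
have [// | [m lt_m [_ + _]]] := DLB_cases [ffun => true].
by rewrite /full_block !bitn_ones; case: (ltnP m.*2 n); case: (ltnP m.*2.+1 n); lia.
Qed.

Definition flipn x q : bits n := [ffun j => (val j == q) (+) x j].

Lemma flipE x (i : 'I_n) : flip x i = flipn x i.
Proof. by apply/ffunP => j; rewrite !ffunE val_eqE; case: (j == i). Qed.

Lemma bitn_flipn x q k : q < n -> bitn (flipn x q) k = (k == q) (+) bitn x k.
Proof.
move=> lt_q; rewrite /bitn; case: insubP => [j _ <-|ge_k]; first by rewrite ffunE.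
by case: eqP => // eq_kq; rewrite eq_kq lt_q in ge_k.
Qed.

Lemma bitn_flipn_even x l e l' : l.*2 + e < n ->
  bitn (flipn x (l.*2 + e)) l'.*2 = ((l' == l) && ~~ e) (+) bitn x l'.*2.
Proof. by move=> lt_q; rewrite bitn_flipn //; congr addb; case: e lt_q; lia. Qed.

Lemma bitn_flipn_odd x l e l' : l.*2 + e < n ->
  bitn (flipn x (l.*2 + e)) l'.*2.+1 = ((l' == l) && e) (+) bitn x l'.*2.+1.
Proof. by move=> lt_q; rewrite bitn_flipn //; congr addb; case: e lt_q; lia. Qed.

Lemma full_block_flipn_other x l e l' : l.*2 + e < n -> l' != l ->
  full_block (flipn x (l.*2 + e)) l' = full_block x l'.
Proof.
by move=> lt_q /negbTE ne_l; rewrite /full_block bitn_flipn_even ?bitn_flipn_odd ?ne_l.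
Qed.

Lemma empty_block_flipn_other x l e l' : l.*2 + e < n -> l' != l ->
  empty_block (flipn x (l.*2 + e)) l' = empty_block x l'.
Proof.
by move=> lt_q /negbTE ne_l; rewrite /empty_block bitn_flipn_even ?bitn_flipn_odd ?ne_l.
Qed.

Lemma flipn_block_lt l e : l < n./2 -> l.*2 + e < n.
Proof. by case: e; lia. Qed.

Section FirstBadBlock.
Variables (x : bits n) (m : nat).
Hypotheses (lt_m : m < n./2) (full_below : forall l, l < m -> full_block x l).
Hypothesis bad_m : ~~ full_block x m.

Lemma DLB_flip_above l e : m < l < n./2 -> DLB (flipn x (l.*2 + e)) = DLB x.
Proof.
move=> /andP[lt_ml lt_l]; have lt_q := flipn_block_lt e lt_l.
have same l' : l' <= m -> full_block (flipn x (l.*2 + e)) l' = full_block x l'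
                         /\ empty_block (flipn x (l.*2 + e)) l' = empty_block x l'.
  by move=> le_l'; rewrite full_block_flipn_other ?empty_block_flipn_other //; apply/eqP; lia.
rewrite (DLB_first_bad lt_m full_below bad_m) (@DLB_first_bad _ m) //.
- by rewrite (same m (leqnn m)).2.
- by move=> l' lt_l'; rewrite (same l' (ltnW lt_l')).1 full_below.
- by rewrite (same m (leqnn m)).1.
Qed.

Lemma DLB_flip_below l e : l < m -> DLB (flipn x (l.*2 + e)) = l.*2.
Proof.
move=> lt_lm; have lt_l := ltn_trans lt_lm lt_m; have lt_q := flipn_block_lt e lt_l.
have /andP[b0 b1] := full_below lt_lm.
rewrite (@DLB_first_bad _ l) //.
- rewrite /empty_block bitn_flipn_even ?bitn_flipn_odd // eqxx b0 b1.
  by case: e lt_q => _ /=; rewrite addn0.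
- move=> l' lt_l'; rewrite (full_block_flipn_other _ lt_q) ?(ltn_eqF lt_l') //.
  exact/full_below/(ltn_trans lt_l').
- by rewrite /full_block bitn_flipn_even ?bitn_flipn_odd // eqxx b0 b1; case: e lt_q.
Qed.

Lemma full_below_flipn_block e l : l < m -> full_block (flipn x (m.*2 + e)) l.
Proof.
move=> lt_lm; rewrite full_block_flipn_other ?full_below ?flipn_block_lt //.
by rewrite ltn_eqF.
Qed.

Lemma DLB_flip_empty e : empty_block x m -> DLB (flipn x (m.*2 + e)) = m.*2.
Proof.
move=> empty_m; have lt_q := flipn_block_lt e lt_m.
rewrite (DLB_first_bad lt_m (full_below_flipn_block e)).
all: move: empty_m; rewrite /full_block /empty_block.
all: rewrite !bitn_flipn_even ?bitn_flipn_odd // eqxx.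
all: case: e lt_q => _; case: (bitn x m.*2); case: (bitn x m.*2.+1) => //= _.
all: by rewrite addn0.
Qed.

Lemma DLB_flip_one e : bitn x (m.*2 + e) -> DLB (flipn x (m.*2 + e)) = m.*2.+1.
Proof.
move=> one; have lt_q := flipn_block_lt e lt_m.
rewrite (DLB_first_bad lt_m (full_below_flipn_block e)).
all: move: one bad_m; rewrite /full_block /empty_block.
all: rewrite !bitn_flipn_even ?bitn_flipn_odd // eqxx.
all: case: e lt_q => _; rewrite ?addn0 ?addn1.
all: by case: (bitn x m.*2); case: (bitn x m.*2.+1) => //= _ _; rewrite addn1.
Qed.

Lemma DLB_flip_zero e : ~~ bitn x (m.*2 + e) -> ~~ empty_block x m ->
  DLB (flipn x (m.*2 + e)) = n \/ (m.+1).*2 <= DLB (flipn x (m.*2 + e)).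
Proof.
move=> zero nonempty; have lt_q := flipn_block_lt e lt_m.
apply: DLB_full_prefix => // l; rewrite ltnS leq_eqVlt => /orP[/eqP-> | ]; last first.
  exact: full_below_flipn_block.
move: zero nonempty bad_m; rewrite /full_block /empty_block.
rewrite !bitn_flipn_even ?bitn_flipn_odd // eqxx.
by case: e lt_q => _; rewrite ?addn0 ?addn1; case: (bitn x m.*2); case: (bitn x m.*2.+1).
Qed.

End FirstBadBlock.
End DLBBlocks.

Section AdditiveDrift.
Variables (R : realType) (alpha : R) (n : nat) (f : bits n -> R).
Local Open Scope ring_scope.
Hypothesis alpha_ge1 : 1 <= alpha.

(* The chance that a step from [x] proposing [z] ends in [y]; the mass that
   evaluates an optimum is dropped, as in [surv]. *)
Definition move_prob (x z y : bits n) : R :=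
  if is_opt f z then 0
  else acc alpha f x z * (z == y)%:R + (1 - acc alpha f x z) * (x == y)%:R.

Definition step_prob (x y : bits n) : R :=
  \sum_(i < n) n%:R^-1 * move_prob x (flip x i) y.

Lemma survS t y : surv alpha f t.+1 y = \sum_x surv alpha f t x * step_prob x y.
Proof. by []. Qed.

Lemma acc_opt x y : is_opt f y -> acc alpha f x y = 1.
Proof. by move=> /forallP/(_ x) fxy; rewrite /acc fxy. Qed.

Lemma acc_ge0 x y : 0 <= acc alpha f x y.
Proof. by rewrite /acc; case: ifP => _; rewrite ?ler01 ?powR_ge0. Qed.

Lemma acc_le1 x y : acc alpha f x y <= 1.
Proof.
rewrite /acc; case: ifPn => [_|fyx]; first exact: lexx.
by rewrite -(powRr0 alpha) ler_powR // subr_le0 ltW // ltNge.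
Qed.

Lemma move_prob_ge0 x z y : 0 <= move_prob x z y.
Proof.
rewrite /move_prob; case: ifP => _ //.
by rewrite addr_ge0 ?mulr_ge0 ?acc_ge0 ?subr_ge0 ?acc_le1.
Qed.

Lemma surv_ge0 t y : 0 <= surv alpha f t y.
Proof.
elim: t y => [|t IH] y /=; first by case: ifP => _; rewrite ?invr_ge0.
apply: sumr_ge0 => x _; rewrite mulr_ge0 // sumr_ge0 // => i _.
by rewrite mulr_ge0 ?invr_ge0 ?move_prob_ge0.
Qed.

Lemma move_prob_to_opt x z y : is_opt f y -> x != y -> move_prob x z y = 0.
Proof.
move=> opt_y /negbTE neq_xy; rewrite /move_prob neq_xy mulr0 addr0.
by case: eqP => [->|_]; rewrite ?opt_y // mulr0; case: ifP.
Qed.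

Lemma surv_opt t y : is_opt f y -> surv alpha f t y = 0.
Proof.
move=> opt_y; elim: t => [|t IH]; first by rewrite /= opt_y.
rewrite survS big1 // => x _; have [->|neq_xy] := eqVneq x y; first by rewrite IH mul0r.
by rewrite /step_prob big1 ?mulr0 // => i _; rewrite move_prob_to_opt ?mulr0.
Qed.

Definition surv_mass t : R := \sum_y surv alpha f t y.

Lemma surv_mass_ge0 t : 0 <= surv_mass t.
Proof. by apply: sumr_ge0 => y _; exact: surv_ge0. Qed.

Lemma surv_mass0_le1 : surv_mass 0 <= 1.
Proof.
have card_gt0 : (0 < #|{: bits n}|)%N by apply/card_gt0P; exists [ffun => true].
apply: (@le_trans _ _ (\sum_(y : bits n) (#|{: bits n}|%:R)^-1)).
  by apply: ler_sum => y _ /=; case: ifP => _; rewrite ?invr_ge0.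
by rewrite sumr_const -[X in X <= _]mulr_natr cardT -cardE mulVf // pnatr_eq0 -lt0n.
Qed.

Section Potential.
Variable g : bits n -> R.
Hypothesis g_opt : forall y, is_opt f y -> g y = 0.

Lemma move_prob_mean x z :
  \sum_y move_prob x z y * g y = g x + acc alpha f x z * (g z - g x).
Proof.
rewrite /move_prob; have [opt_z|_] := boolP (is_opt f z).
  rewrite big1 => [|y _]; last by rewrite mul0r.
  by rewrite acc_opt // (g_opt opt_z) mul1r sub0r subrr.
have pick u : \sum_y (u == y)%:R * g y = g u.
  rewrite (bigD1 u) //= eqxx mul1r big1 ?addr0 // => y.
  by rewrite eq_sym => /negbTE->; rewrite mul0r.
under eq_bigr do rewrite mulrDl -!mulrA.
by rewrite big_split /= -!mulr_sumr !pick; ring.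
Qed.

Definition drift x : R :=
  n%:R^-1 * \sum_(i < n) acc alpha f x (flip x i) * (g (flip x i) - g x).

Lemma step_prob_mean x : (0 < n)%N -> \sum_y step_prob x y * g y = g x + drift x.
Proof.
move=> n_gt0; rewrite /step_prob /drift.
under eq_bigr do rewrite mulr_suml.
rewrite exchange_big /=.
under eq_bigr do under eq_bigr do rewrite -mulrA.
under eq_bigr do rewrite -mulr_sumr move_prob_mean.
rewrite -mulr_sumr big_split /= sumr_const card_ord -[g x *+ n]mulr_natl mulrDr mulrA.
by rewrite mulVf ?mul1r // pnatr_eq0 -lt0n.
Qed.

Definition surv_potential t : R := \sum_y surv alpha f t y * g y.

Lemma surv_potentialS_le (delta : R) t : (0 < n)%N ->
    (forall x, ~~ is_opt f x -> drift x <= - delta) ->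
  surv_potential t.+1 <= surv_potential t - delta * surv_mass t.
Proof.
move=> n_gt0 drift_le; rewrite /surv_potential /surv_mass.
under eq_bigr do rewrite survS mulr_suml.
rewrite exchange_big mulr_sumr -sumrB /=; apply: ler_sum => x _.
under eq_bigr do rewrite -mulrA.
rewrite -mulr_sumr step_prob_mean //.
have [opt_x|nopt_x] := boolP (is_opt f x); first by rewrite surv_opt // !mul0r mulr0 subr0.
by rewrite mulrDr mulrC [delta * _]mulrC -mulrN lerD2l ler_wpM2l ?surv_ge0 ?drift_le.
Qed.

Theorem expected_runtime_drift (gmax delta : R) : (0 < n)%N -> 0 < delta ->
    (forall x, 0 <= g x <= gmax) -> (forall x, ~~ is_opt f x -> drift x <= - delta) ->
  (expected_runtime alpha f <= (1 + gmax / delta)%:E)%E.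
Proof.
move=> n_gt0 delta_gt0 g_bounds drift_le.
have pot_ge0 t : 0 <= surv_potential t.
  by apply: sumr_ge0 => y _; rewrite mulr_ge0 ?surv_ge0 //; case/andP: (g_bounds y).
have pot0_le : surv_potential 0 <= gmax.
  have gmax_ge0 : 0 <= gmax.
    by have /andP[g0 g1] := g_bounds [ffun => true]; apply: le_trans g1.
  rewrite -[gmax]mulr1; apply: le_trans (ler_wpM2l gmax_ge0 surv_mass0_le1).
  rewrite /surv_potential /surv_mass mulr_sumr.
  by apply: ler_sum => y _; rewrite mulrC ler_wpM2r ?surv_ge0 //; case/andP: (g_bounds y).
have telescope N :
    delta * \sum_(0 <= t < N) surv_mass t + surv_potential N <= surv_potential 0.
  elim: N => [|N IH]; first by rewrite big_geq // mulr0 add0r.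
  rewrite big_nat_recr //= mulrDr.
  by have := surv_potentialS_le N n_gt0 drift_le; lra.
have partial_le N : \sum_(0 <= t < N) surv_mass t <= gmax / delta.
  rewrite ler_pdivlMr //; have := telescope N; have := pot_ge0 N; lra.
rewrite /expected_runtime EFinD leeD2l //; apply: lime_le.
  by apply: is_cvg_nneseries => t _ _; rewrite lee_fin surv_mass_ge0.
by apply: nearW => N; rewrite sumEFin lee_fin.
Qed.
End Potential.
End AdditiveDrift.

Section Gain.
Variables (R : realType) (n : nat) (alpha b : R).
Local Open Scope ring_scope.

(* [v] is odd when the first block that is not 11 is 00, and [b] rewards a single
   one in that block. *)
Definition potential (v : nat) : R :=
  if v == n then 0 else (n./2)%:R - (v./2)%:R - (if odd v then 0 else b).

Lemma potential_block m (e : bool) : (m < n./2)%N ->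
  potential (m.*2 + e)%N = (n./2)%:R - m%:R - (if e then 0 else b).
Proof.
move=> lt_m; rewrite /potential ifN; last by apply/eqP; case: e => /=; lia.
by rewrite oddD odd_double oddb addnC half_bit_double.
Qed.

Lemma potential_even m : (m < n./2)%N -> potential m.*2 = (n./2)%:R - m%:R - b.
Proof. by move=> lt_m; rewrite -[m.*2]addn0 (potential_block false). Qed.

Lemma potential_odd m : (m < n./2)%N -> potential m.*2.+1 = (n./2)%:R - m%:R.
Proof. by move=> lt_m; rewrite -addn1 (potential_block true) // subr0. Qed.

Definition accept (u v : nat) : R := if (u <= v)%N then 1 else alpha ^- (u - v).

Definition gain (u v : nat) : R := accept u v * (potential v - potential u).

Lemma gain_below m l (e : bool) : 0 <= alpha -> 0 <= b -> (l < m < n./2)%N ->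
  gain (m.*2 + e)%N l.*2 <= alpha ^- e * ((m - l)%:R * (alpha ^- 2) ^+ (m - l)).
Proof.
move=> alpha_ge0 b_ge0 /andP[lt_lm lt_m].
rewrite /gain /accept ifN; last by rewrite -ltnNge; case: e => /=; lia.
rewrite potential_block // potential_even ?(ltn_trans lt_lm) //.
have -> : (m.*2 + e - l.*2 = e + 2 * (m - l))%N by case: e => /=; lia.
rewrite exprD invfM exprM exprVn -mulrA ler_wpM2l ?invr_ge0 ?exprn_ge0 //.
rewrite mulrC ler_wpM2r ?exprn_ge0 ?invr_ge0 ?exprn_ge0 // (natrB _ (ltnW lt_lm)).
by case: e; lra.
Qed.

Lemma gain_refl u : gain u u = 0.
Proof. by rewrite /gain subrr mulr0. Qed.

Lemma gain_empty_to_half m : (m < n./2)%N -> gain m.*2.+1 m.*2 = - (alpha^-1 * b).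
Proof.
move=> lt_m; rewrite /gain /accept ltnn subSnn expr1 potential_even ?potential_odd //.
ring.
Qed.

Lemma gain_half_to_empty m : (m < n./2)%N -> gain m.*2 m.*2.+1 = b.
Proof.
move=> lt_m; rewrite /gain /accept leqnSn potential_even ?potential_odd // mul1r.
ring.
Qed.

Lemma gain_half_to_full m v : 0 <= b -> (m < n./2)%N -> v = n \/ ((m.+1).*2 <= v)%N ->
  gain m.*2 v <= b - 1.
Proof.
move=> b_ge0 lt_m full_v; rewrite /gain /accept ifT; last first.
  by case: full_v => [->|]; lia.
have le_mN : m%:R + 1 <= (n./2)%:R :> R by rewrite natr1 ler_nat.
rewrite mul1r potential_even // /potential; case: eqP => [_|ne_v]; first lra.
have : m%:R + 1 <= (v./2)%:R :> R by rewrite natr1 ler_nat; case: full_v; lia.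
by case: ifP; lra.
Qed.
End Gain.

Section ArithGeomSeries.
Variables (R : realType) (q : R).
Local Open Scope ring_scope.

Definition agsum (N : nat) : R := \sum_(1 <= k < N) k%:R * q ^+ k.

Lemma agsum_closed N :
  agsum N.+1 * (1 - q) ^+ 2 = q - N.+1%:R * q ^+ N.+1 + N%:R * q ^+ N.+2.
Proof.
elim: N => [|N IH]; first by rewrite /agsum big_geq // mul0r expr1; ring.
by rewrite /agsum big_nat_recr //= mulrDl IH !exprS -!natr1; ring.
Qed.

Lemma agsum_le N : 0 <= q < 1 -> agsum N <= q / (1 - q) ^+ 2.
Proof.
move=> /andP[q_ge0 q_lt1]; have d_gt0 : 0 < (1 - q) ^+ 2 by rewrite exprn_gt0 // subr_gt0.
case: N => [|N]; first by rewrite /agsum big_geq // divr_ge0 // ltW.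
have gap : q - agsum N.+1 * (1 - q) ^+ 2 = q ^+ N.+1 * (1 + N%:R * (1 - q)).
  by rewrite agsum_closed -natr1 [q ^+ N.+2]exprSr; ring.
rewrite ler_pdivlMr // -subr_ge0 gap mulr_ge0 ?exprn_ge0 ?addr_ge0 ?mulr_ge0 //.
by rewrite subr_ge0 ltW.
Qed.

Lemma agsum_rev m : \sum_(0 <= l < m) (m - l)%:R * q ^+ (m - l) = agsum m.+1.
Proof.
rewrite /agsum big_add1 big_nat_rev /=; apply: eq_big_nat => l /andP[_ lt_lm].
by rewrite add0n (_ : m - (m - l.+1) = l.+1)%N //; lia.
Qed.

Lemma agsum_nondecreasing : 0 <= q -> {homo agsum : N M / (N <= M)%N >-> N <= M}.
Proof.
move=> q_ge0 N M le_NM; rewrite /agsum.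
have [N_le1|lt_1N] := leqP N 1.
  by rewrite big_geq // sumr_ge0 // => k _; rewrite mulr_ge0 ?exprn_ge0.
rewrite (big_cat_nat (ltnW lt_1N) le_NM) /= lerDl.
by rewrite sumr_ge0 // => k _; rewrite mulr_ge0 ?exprn_ge0.
Qed.

Lemma agsum_limn : 0 <= q < 1 ->
  (forall N, agsum N <= limn agsum) /\ limn agsum <= q / (1 - q) ^+ 2.
Proof.
move=> q01; have /andP[q_ge0 _] := q01.
have nd := agsum_nondecreasing q_ge0.
have cv : cvgn agsum.
  apply: nondecreasing_is_cvgn => //.
  by exists (q / (1 - q) ^+ 2) => _ [N _ <-]; apply: agsum_le.
split; first by move=> N; apply: nondecreasing_cvgn_le.
by apply: limr_le => //; apply: nearW => N; apply: agsum_le.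
Qed.
End ArithGeomSeries.

Lemma sum_pairs (V : nmodType) (F : nat -> V) k :
  (\sum_(0 <= q < k.*2) F q = \sum_(0 <= l < k) \sum_(e : bool) F (l.*2 + e)%N)%R.
Proof.
elim: k => [|k IH]; first by rewrite !big_geq.
by rewrite doubleS !big_nat_recr //= IH big_bool addn0 addn1 -addrA [(F _ + F _)%R]addrC.
Qed.

Lemma sum_flip_blocks (V : nmodType) n (F : bits n -> V) x : ~~ odd n ->
  (\sum_(i < n) F (flip x i)
     = \sum_(0 <= l < n./2) \sum_(e : bool) F (flipn x (l.*2 + e)))%R.
Proof.
move=> n_even; have n_eq : (n./2).*2 = n by rewrite -[RHS]odd_double_half (negbTE n_even).
by rewrite -(sum_pairs (F \o flipn x)) n_eq big_mkord; apply: eq_bigr => i _; rewrite flipE.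
Qed.

Section DLBDrift.
Variables (R : realType) (n : nat) (alpha : R).
Local Open Scope ring_scope.

Lemma is_opt_DLB y : is_opt (fun z : bits n => (DLB z)%:R : R) y = (DLB y == n).
Proof.
apply/forallP/eqP => [/(_ [ffun => true])|DLBy z]; last by rewrite ler_nat DLBy DLB_le.
by rewrite ler_nat DLB_ones => le_ny; apply/eqP; rewrite eqn_leq DLB_le.
Qed.

Lemma acc_DLB x y : 0 <= alpha ->
  acc alpha (fun z : bits n => (DLB z)%:R) x y = accept alpha (DLB x) (DLB y).
Proof.
move=> alpha_ge0; rewrite /acc /accept ler_nat; case: ifPn => // /negbTE.
rewrite leqNgt => /negbFE lt_yx.
by rewrite -powR_invn // (natrB _ (ltnW lt_yx)) opprB.
Qed.

Lemma potential_DLB_bounds (b : R) (x : bits n) : 0 <= b <= 1 ->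
  0 <= potential n b (DLB x) <= (n./2)%:R.
Proof.
move=> /andP[b_ge0 b_le1].
have [->|[m lt_m [_ _ ->]]] := DLB_cases x; first by rewrite /potential eqxx lexx ler0n.
have : m%:R + 1 <= (n./2)%:R :> R by rewrite natr1 ler_nat.
by have := ler0n R m; rewrite potential_block //; case: (empty_block x m) => /=; lra.
Qed.

Lemma DLB_drift_sum (b S D : R) (x : bits n) : 1 < alpha -> 0 <= b -> ~~ odd n ->
    (forall N, agsum (alpha ^- 2) N <= S) ->
    D <= 2 / alpha * (b - S) -> D <= 1 - 2 * b - 2 * S -> DLB x != n ->
  \sum_(i < n) gain n alpha b (DLB x) (DLB (flip x i)) <= - D.
Proof.
move=> alpha_gt1 b_ge0 n_even agsum_le D_le_empty D_le_half.
have [->|[m lt_m [full_below bad_m DLBx]]] := DLB_cases x; first by rewrite eqxx.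
move=> _; have alpha_ge0 : 0 <= alpha by lra.
pose F q := gain n alpha b (DLB x) (DLB (flipn x q)).
rewrite (sum_flip_blocks (fun y => gain n alpha b (DLB x) (DLB y))) //.
rewrite (big_cat_nat (leq0n m) (ltnW lt_m)) (big_ltn lt_m) /=.
have high : \sum_(m.+1 <= l < n./2) \sum_(e : bool) F (l.*2 + e)%N = 0.
  rewrite big_nat_cond big1 // => l /andP[/andP[lt_ml lt_l] _]; apply: big1 => e _.
  by rewrite /F (DLB_flip_above lt_m full_below bad_m) ?lt_ml ?gain_refl.
have low : \sum_(0 <= l < m) \sum_(e : bool) F (l.*2 + e)%N
    <= 2 * alpha ^- (empty_block x m) * agsum (alpha ^- 2) m.+1.
  rewrite -agsum_rev mulr_sumr; apply: ler_sum_nat => l /andP[_ lt_lm].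
  rewrite -mulrA mulr_natl mulr2n big_bool /F !(DLB_flip_below lt_m full_below) // DLBx.
  by rewrite lerD // gain_below ?lt_lm.
rewrite high addr0; have agsum_le_S := agsum_le m.+1.
have [empty_m|nonempty_m] := boolP (empty_block x m).
  have mid : \sum_(e : bool) F (m.*2 + e)%N = - (alpha^-1 * b) *+ 2.
    rewrite -card_bool -sumr_const; apply: eq_bigr => e _.
    rewrite /F DLBx empty_m (DLB_flip_empty lt_m full_below) // addn1.
    exact: gain_empty_to_half.
  move: low; rewrite mid empty_m expr1.
  have : alpha^-1 * agsum (alpha ^- 2) m.+1 <= alpha^-1 * S by rewrite ler_wpM2l ?invr_ge0.
  lra.
have half (e : bool) : F (m.*2 + e)%N <= (if bitn x (m.*2 + e) then b else b - 1).
  rewrite /F DLBx (negbTE nonempty_m) addn0; case: ifPn => [one|zero].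
    by rewrite (DLB_flip_one lt_m full_below bad_m) // gain_half_to_empty.
  by rewrite gain_half_to_full //; apply: (DLB_flip_zero lt_m full_below bad_m).
(* block [m] holds exactly one one *)
have mid : \sum_(e : bool) F (m.*2 + e)%N <= 2 * b - 1.
  rewrite big_bool; apply: le_trans (lerD (half true) (half false)) _.
  move: bad_m nonempty_m; rewrite /full_block /empty_block addn1 addn0.
  by case: (bitn x m.*2); case: (bitn x m.*2.+1) => //= _ _; lra.
by move: low; rewrite (negbTE nonempty_m) expr0 invr1 mulr1; lra.
Qed.

Lemma expected_runtime_DLB_le (b S D : R) : (0 < n)%N -> ~~ odd n -> 1 < alpha ->
    0 <= b <= 1 -> (forall N, agsum (alpha ^- 2) N <= S) -> 0 < D ->
    D <= 2 / alpha * (b - S) -> D <= 1 - 2 * b - 2 * S ->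
  (expected_runtime alpha (fun x : bits n => (DLB x)%:R)
     <= (1 + n%:R ^+ 2 / (2 * D))%:E)%E.
Proof.
move=> n_gt0 n_even alpha_gt1 b01 agsum_le D_gt0 D_le_empty D_le_half.
have n_gt0R : 0 < n%:R :> R by rewrite ltr0n.
have half_n : (n./2)%:R = n%:R / 2 :> R.
  rewrite -[in RHS](odd_double_half n) (negbTE n_even) add0n -muln2 natrM.
  by rewrite mulfK // pnatr_eq0.
pose g (x : bits n) := potential n b (DLB x).
have g_opt y : is_opt (fun x : bits n => (DLB x)%:R : R) y -> g y = 0.
  by rewrite is_opt_DLB => /eqP DLBy; rewrite /g DLBy /potential eqxx.
have drift_le x : ~~ is_opt (fun x : bits n => (DLB x)%:R : R) x ->
    drift alpha (fun x : bits n => (DLB x)%:R) g x <= - (D / n%:R).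
  rewrite is_opt_DLB /drift => DLBx; rewrite mulrC -mulNr ler_wpM2r ?invr_ge0 //.
  rewrite (eq_bigr (fun i => gain n alpha b (DLB x) (DLB (flip x i)))) => [|i _].
    by apply: DLB_drift_sum => //; lra.
  by rewrite acc_DLB //; lra.
have := expected_runtime_drift (ltW alpha_gt1) g_opt n_gt0 (divr_gt0 D_gt0 n_gt0R)
  (fun x => potential_DLB_bounds x b01) drift_le.
by rewrite half_n (_ : n%:R / 2 / (D / n%:R) = n%:R ^+ 2 / (2 * D)) //; field; lra.
Qed.
End DLBDrift.

Local Open Scope ring_scope.

Lemma CconstE (R : realType) (alpha : R) :
  Cconst alpha = 2 / alpha * (2^-1 - 2 * limn (agsum (alpha ^- 2))).
Proof.
rewrite /Cconst (_ : (fun N => _) = agsum (alpha ^- 2)) //.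
by apply/funext => N; apply: eq_bigr => k _; rewrite exprM exprVn.
Qed.

(* With q = alpha^-2, q / (1 - q)^2 < 1/4 amounts to 2 alpha < alpha^2 - 1,
   that is (alpha - 1)^2 > 2. *)
Lemma agsum_bound_lt_quarter (R : realType) (alpha : R) : Num.sqrt 2 + 1 < alpha ->
  alpha ^- 2 / (1 - alpha ^- 2) ^+ 2 < 4^-1.
Proof.
move=> alpha_gt; have sqrt2_ge0 := sqrtr_ge0 (2 : R).
have sqrt2_sq : Num.sqrt 2 ^+ 2 = 2 :> R by rewrite sqr_sqrtr // ler0n.
have alpha_gt1 : 1 < alpha by lra.
have q_gt0 : 0 < alpha ^- 2 by rewrite invr_gt0 exprn_gt0 //; lra.
have q_lt1 : alpha ^- 2 < 1 by rewrite invf_lt1 ?exprn_gt0 ?expr_gt1 //; lra.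
have key : 2 * alpha < alpha ^+ 2 - 1 by nra.
rewrite ltr_pdivrMr ?exprn_gt0 ?subr_gt0 //.
have -> : 4^-1 * (1 - alpha ^- 2) ^+ 2 =
    alpha ^- 2 + (alpha ^- 2) ^+ 2 / 4 * ((alpha ^+ 2 - 1) ^+ 2 - 4 * alpha ^+ 2).
  by field; apply/eqP; lra.
rewrite ltrDl mulr_gt0 ?divr_gt0 ?exprn_gt0 //; nra.
Qed.

(* The choice of [b] makes the bound of [DLB_drift_sum] for a 00 block exactly
   [5 P / (4 alpha)]. *)
Lemma drift_margin (R : realType) (alpha S : R) : 2 <= alpha -> 0 <= S < 4^-1 ->
  let P := 2^-1 - 2 * S in let b := 4^-1 + P / 8 in let D := 5 * P / (4 * alpha) in
  [/\ 0 <= b <= 1, 0 < D, D <= 2 / alpha * (b - S) & D <= 1 - 2 * b - 2 * S].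
Proof.
move=> alpha_ge2 /andP[S_ge0 S_lt] P b D; have P_gt0 : 0 < P by rewrite /P; lra.
split.
- by rewrite /b /P; apply/andP; split; lra.
- by rewrite /D divr_gt0 //; lra.
- suff -> : D = 2 / alpha * (b - S) by rewrite lexx.
  by rewrite /D /b /P; field; lra.
- have -> : 1 - 2 * b - 2 * S = 3 / 4 * P by rewrite /b /P; field.
  by rewrite /D ler_pdivrMr; [nra | lra].
Qed.

Lemma drift_bound_le (R : realType) (alpha P x : R) : 2 <= alpha -> 0 < P <= 2^-1 ->
  2 <= x -> 1 + x ^+ 2 / (2 * (5 * P / (4 * alpha))) <= x ^+ 2 / (2 / alpha * P).
Proof.
move=> alpha_ge2 /andP[P_gt0 P_le] x_ge2; set K := alpha * x ^+ 2 / P.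
have -> : x ^+ 2 / (2 * (5 * P / (4 * alpha))) = 2 / 5 * K.
  by rewrite /K; field; rewrite !gt_eqF //; lra.
have -> : x ^+ 2 / (2 / alpha * P) = K / 2 by rewrite /K; field; rewrite !gt_eqF //; lra.
have ax2_ge8 : 2 * 4 <= alpha * x ^+ 2 by rewrite ler_pM ?exprn_ge0 //; nra.
have : 10 <= K by rewrite /K ler_pdivlMr //; lra.
lra.
Qed.

Theorem theorem13 (R : realType) (n : nat) (alpha : R) :
  (0 < n)%N -> ~~ odd n -> Num.sqrt 2 + 1 < alpha ->
  (expected_runtime alpha (fun x : bits n => (DLB x)%:R)
     <= ((n%:R ^+ 2) / Cconst alpha)%:E)%E.
Proof.
move=> n_gt0 n_even alpha_gt; rewrite CconstE.
have sqrt2_ge1 : 1 <= Num.sqrt 2 :> R by rewrite -[X in X <= _]sqrtr1 ler_sqrt ?ler1n.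
have alpha_ge2 : 2 <= alpha by lra.
have q01 : 0 <= alpha ^- 2 < 1.
  by rewrite invr_ge0 exprn_ge0 ?invf_lt1 ?exprn_gt0 ?expr_gt1 //=; lra.
have [agsum_le_S S_le] := agsum_limn q01.
set S := limn _ in agsum_le_S S_le *.
have S_ge0 : 0 <= S by apply: le_trans (agsum_le_S 0%N); rewrite /agsum big_geq.
have S_lt := le_lt_trans S_le (agsum_bound_lt_quarter alpha_gt).
have [|b01 D_gt0 D_le_empty D_le_half] := drift_margin alpha_ge2 (S := S).
  by rewrite S_ge0 S_lt.
apply: le_trans (expected_runtime_DLB_le n_gt0 n_even _ b01 agsum_le_S D_gt0
  D_le_empty D_le_half) _; first lra.
rewrite lee_fin drift_bound_le //; first by apply/andP; split; lra.
by rewrite ler_nat; move: n_gt0 n_even; case: n => [|[|k]].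
Qed.
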